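(* Let $1<d\le n$ be integers, let $C$ be a real symmetric $n\times n$ matrix with unit diagonal, and let $T_{n,d}=\{Y\in\mathbb{R}^{n\times d}: \|Y_i\|_2=1 \text{ for every row } Y_i\}$. For $Y\in T_{n,d}$ set $\psi=YY^T-C$ and $F_Y=2\psi Y$. Suppose $Y\in T_{n,d}$ satisfies $F_Y-\operatorname{diag}(F_YY^T)\,Y=0$, define the diagonal matrix $\lambda=\tfrac12\operatorname{diag}(F_YY^T)$ and $C(\lambda)=C+\lambda$. If $YY^T$ has the $d$ largest (in absolute value) eigenvalues of $C(\lambda)$, i.e. $YY^T$ equals a matrix obtained from an eigenvalue decomposition $C(\lambda)=QDQ^T$ ($Q$ orthogonal, $D$ diagonal) by keeping only $d$ eigenvalues of largest absolute value and replacing the others by $0$, then $YY^T$ is a global minimizer of the problem \[ \text{minimize } \tfrac12\sum_{i<j}(C_{ij}-X_{ij})^2 \ \text{ over symmetric } X\in\mathbb{R}^{n\times n} \text{ with } \operatorname{rank}(X)\le d,\ X_{ii}=1\ (i=1,\dots,n),\ X\succeq 0. \]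
   Context: For a square matrix $A$, $\operatorname{diag}(A)$ denotes the diagonal matrix with $\operatorname{diag}(A)_{ij}=\delta_{ij}A_{ij}$. $X\succeq 0$ means positive semidefinite. The condition $F_Y-\operatorname{diag}(F_YY^T)Y=0$ says that $Y$ is a stationary point on $T_{n,d}$ of $F(Y)=\tfrac12\|YY^T-C\|_F^2$. *)

From HB Require Import structures.
From mathcomp Require Import all_boot all_order all_algebra.
From mathcomp Require Import reals.
Set Implicit Arguments. Unset Strict Implicit. Unset Printing Implicit Defensive.
Import Order.TTheory GRing.Theory Num.Theory.
Local Open Scope ring_scope.

Definition mdiag {R : realType} {n : nat} (A : 'M[R]_n) : 'M[R]_n :=
  diag_mx (\row_i A i i).

Definition row_norm {R : realType} {n d : nat} (Y : 'M[R]_(n, d)) (i : 'I_n) : R :=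
  Num.sqrt (\sum_(j < d) Y i j ^+ 2).

Definition in_T {R : realType} {n d : nat} (Y : 'M[R]_(n, d)) : Prop :=
  forall i : 'I_n, row_norm Y i = 1.

Definition psd {R : realType} {n : nat} (X : 'M[R]_n) : Prop :=
  forall v : 'cV[R]_n, 0 <= (v^T *m X *m v) 0 0.

Definition orthogonal_mx {R : realType} {n : nat} (Q : 'M[R]_n) : Prop :=
  Q *m Q^T = 1%:M /\ Q^T *m Q = 1%:M.

Definition objective {R : realType} {n : nat} (C X : 'M[R]_n) : R :=
  2^-1 * \sum_(i < n) \sum_(j < n | (i < j)%N) (C i j - X i j) ^+ 2.

Definition feasible {R : realType} {n : nat} (d : nat) (X : 'M[R]_n) : Prop :=
  [/\ X^T = X, (\rank X <= d)%N, (forall i, X i i = 1) & psd X].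

Definition global_minimizer {R : realType} {n : nat} (d : nat) (C X : 'M[R]_n) : Prop :=
  feasible d X /\ forall X' : 'M[R]_n, feasible d X' -> objective C X <= objective C X'.

Definition top_d_eig_truncation {R : realType} {n : nat} (d : nat) (M X : 'M[R]_n) : Prop :=
  exists (Q : 'M[R]_n) (ev : 'rV[R]_n) (S : {set 'I_n}),
    [/\ orthogonal_mx Q,
        M = Q *m diag_mx ev *m Q^T,
        #|S| = d,
        (forall i j, i \in S -> j \notin S -> `|ev 0 j| <= `|ev 0 i|) &
        X = Q *m diag_mx (\row_i (if i \in S then ev 0 i else 0)) *m Q^T].

From HB Require Import structures.
From mathcomp Require Import all_boot all_order all_algebra.
From mathcomp Require Import reals.
From mathcomp Require Import ring lra.
Set Implicit Arguments.
Unset Strict Implicit.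
Unset Printing Implicit Defensive.
Import Order.TTheory GRing.Theory Num.Theory.
Local Open Scope ring_scope.

(* On feasible matrices (symmetric, unit diagonal) the objective differs from
   [||C + L - X||_F^2 / 4] by a constant, for every diagonal [L], since it only
   sees off-diagonal entries.  A truncated eigendecomposition of [C + L] is a
   best approximation of rank at most [d] (Eckart-Young), hence beats every
   feasible matrix.  Eckart-Young is proved with the orthogonal projector [P]
   onto the row space of a competitor [W]: [||D - W||^2 >= sum_i D_ii^2 (1 - P_ii)],
   and the weights [P_ii] lie in [[0, 1]] and sum to [rank W <= d], so the
   right-hand side is at least the sum of the [n - d] smallest [D_ii^2]. *)

Lemma weighted_sum_le_top_sum (R : realDomainType) (I : finType)
    (a p : I -> R) (S : {set I}) :
  (forall i, 0 <= a i) -> (forall i, 0 <= p i <= 1) -> \sum_i p i <= #|S|%:R ->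
  (forall i j, i \in S -> j \notin S -> a j <= a i) ->
  \sum_i a i * p i <= \sum_(i in S) a i.
Proof.
move=> a_ge0 p01 psum top.
have p_ge0 i : 0 <= p i by have /andP[] := p01 i.
have p_le1 i : 0 <= 1 - p i by have /andP[_] := p01 i; rewrite subr_ge0.
(* A threshold between the values of [a] off [S] and on [S]; the default [0]
   covers the case [S = setT]. *)
pose t := \big[Num.max/0]_(j | j \notin S) a j.
have t_ge0 : 0 <= t by apply: bigmax_ge_id.
have le_t j : j \notin S -> a j <= t by move=> jS; rewrite /t; apply: le_bigmax_cond.
have t_le i : i \in S -> t <= a i by move=> iS; apply: bigmax_le => // j; apply: top.
have inS : t * \sum_(i in S) (1 - p i) <= \sum_(i in S) a i * (1 - p i).
  by rewrite mulr_sumr; apply: ler_sum => i iS; apply: ler_wpM2r (t_le i iS).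
have offS : \sum_(i | i \notin S) a i * p i <= t * \sum_(i | i \notin S) p i.
  by rewrite mulr_sumr; apply: ler_sum => i iS; apply: ler_wpM2r (le_t i iS).
have sum_p : \sum_i p i = \sum_(i in S) p i + \sum_(i | i \notin S) p i.
  by rewrite (bigID (mem S)).
have sum_ap : \sum_i a i * p i
    = \sum_(i in S) a i * p i + \sum_(i | i \notin S) a i * p i.
  by rewrite (bigID (mem S)).
have sum_a1p : \sum_(i in S) a i * (1 - p i)
    = \sum_(i in S) a i - \sum_(i in S) a i * p i.
  by rewrite -sumrB; apply: eq_bigr => i _; rewrite mulrBr mulr1.
have : \sum_(i | i \notin S) a i * p i
    <= \sum_(i in S) a i - \sum_(i in S) a i * p i.
  rewrite -sum_a1p; apply: le_trans offS (le_trans _ inS); apply: ler_wpM2l => //.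
  by rewrite sumrB sumr_const; move: psum; rewrite sum_p; lra.
by rewrite sum_ap; lra.
Qed.

Definition frob2 {R : numDomainType} {m n : nat} (A : 'M[R]_(m, n)) : R :=
  \sum_i \sum_j A i j ^+ 2.

Section RealFieldMatrices.
Variable R : realFieldType.

Lemma frob2E m n (A : 'M[R]_(m, n)) : frob2 A = \tr (A *m A^T).
Proof.
rewrite /frob2 /mxtrace; apply: eq_bigr => i _; rewrite mxE.
by apply: eq_bigr => j _; rewrite !mxE expr2.
Qed.

Lemma frob2_ge0 m n (A : 'M[R]_(m, n)) : 0 <= frob2 A.
Proof. by apply: sumr_ge0 => i _; apply: sumr_ge0 => j _; apply: sqr_ge0. Qed.

Lemma frob2_eq0 m n (A : 'M[R]_(m, n)) : frob2 A = 0 -> A = 0.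
Proof.
move=> A0; apply/matrixP => i j; rewrite mxE; apply/eqP; rewrite -sqrf_eq0.
have /psumr_eq0P Ai0 : \sum_j A i j ^+ 2 = 0.
  by apply: (psumr_eq0P _ A0) => // k _; apply: sumr_ge0 => l _; apply: sqr_ge0.
by apply/eqP/Ai0 => // k _; apply: sqr_ge0.
Qed.

Lemma mulmx_trmx_eq0 m n (A : 'M[R]_(m, n)) : A *m A^T = 0 -> A = 0.
Proof. by move=> AAt0; apply: frob2_eq0; rewrite frob2E AAt0 mxtrace0. Qed.

Lemma frob2_conj_orth n (Q A : 'M[R]_n) :
  Q^T *m Q = 1%:M -> frob2 (Q *m A *m Q^T) = frob2 A.
Proof.
move=> QtQ; rewrite !frob2E !trmx_mul trmxK.
rewrite -!mulmxA (mulmxA Q^T) QtQ mul1mx mxtrace_mulC -!mulmxA QtQ mulmx1.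
by rewrite mxtrace_mulC.
Qed.

Lemma frob2_diag_mx n (v : 'rV[R]_n) : frob2 (diag_mx v) = \sum_i v 0 i ^+ 2.
Proof.
rewrite frob2E tr_diag_mx mul_diag_mx /mxtrace; apply: eq_bigr => i _.
by rewrite !mxE eqxx mulr1n expr2.
Qed.

Lemma frob2_le_addr m n (E1 E2 : 'M[R]_(m, n)) :
  E1 *m E2^T = 0 -> frob2 E1 <= frob2 (E1 + E2).
Proof.
move=> E12; have E21 : E2 *m E1^T = 0 by rewrite -[E2]trmxK -trmx_mul E12 trmx0.
rewrite !frob2E linearD /= !(mulmxDl, mulmxDr) E12 E21 !addr0 add0r mxtraceD.
by rewrite lerDl -frob2E frob2_ge0.
Qed.

Lemma frob2_sym n (E : 'M[R]_n) : E^T = E ->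
  frob2 E = \sum_i E i i ^+ 2 + 2 * \sum_(i < n) \sum_(j < n | (i < j)%N) E i j ^+ 2.
Proof.
move=> Esym; have Ets (i j : 'I_n) : E j i = E i j by rewrite -[in LHS]Esym mxE.
have row_split (i : 'I_n) : \sum_j E i j ^+ 2 = E i i ^+ 2
    + \sum_(j < n | (i < j)%N) E i j ^+ 2 + \sum_(j < n | (j < i)%N) E i j ^+ 2.
  rewrite (bigD1 i) //= -addrA; congr (_ + _).
  rewrite (bigID (fun j : 'I_n => (i < j)%N)) /=.
  by apply: congr2; apply: eq_bigl => j; rewrite -val_eqE /= ?ltnNge;
    case: ltngtP.
rewrite /frob2 (eq_bigr _ (fun i _ => row_split i)) !big_split /=.
have -> : \sum_(i < n) \sum_(j < n | (j < i)%N) E i j ^+ 2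
        = \sum_(i < n) \sum_(j < n | (i < j)%N) E i j ^+ 2.
  by rewrite (exchange_big_dep xpredT) //=; apply: eq_bigr => i _;
     apply: eq_bigr => j _; rewrite Ets.
by rewrite -addrA mulr_natl mulr2n.
Qed.

Lemma row_free_gram_unit m n (B : 'M[R]_(m, n)) :
  row_free B -> B *m B^T \in unitmx.
Proof.
move=> Bfree; rewrite -row_free_unit; apply: inj_row_free => u uG0.
apply: (row_free_inj Bfree); rewrite mul0mx; apply: mulmx_trmx_eq0.
by rewrite trmx_mul !mulmxA -(mulmxA u) uG0 mul0mx.
Qed.

Lemma row_free_proj r n (B : 'M[R]_(r, n)) : row_free B -> exists P : 'M[R]_n,
  [/\ P^T = P, P *m P = P, B *m P = B & \tr P = r%:R].
Proof.
move=> /row_free_gram_unit Gu; pose P := B^T *m invmx (B *m B^T) *m B; exists P.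
have Gsym : (B *m B^T)^T = B *m B^T by rewrite trmx_mul trmxK.
have BP : B *m P = B by rewrite !mulmxA mulmxV // mul1mx.
split=> //.
- by rewrite !trmx_mul trmxK trmx_inv Gsym mulmxA.
- by rewrite {1}/P -!mulmxA BP mulmxA.
- by rewrite mxtrace_mulC mulmxA mulmxV // mxtrace1.
Qed.

Lemma row_proj_exists n (W : 'M[R]_n) : exists P : 'M[R]_n,
  [/\ P^T = P, P *m P = P, W *m P = W & \tr P = (\rank W)%:R].
Proof.
have [P [Psym Pidem BP trP]] := row_free_proj (row_base_free W).
exists P; split=> //.
have /submxP[A ->] : (W <= row_base W)%MS by rewrite eq_row_base.
by rewrite -mulmxA BP.
Qed.

Lemma sym_idem_diag_bounds n (P : 'M[R]_n) i :
  P^T = P -> P *m P = P -> 0 <= P i i <= 1.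
Proof.
move=> Psym Pidem.
have Pii : P i i = \sum_j P i j ^+ 2.
  rewrite -[in LHS]Pidem mxE; apply: eq_bigr => j _.
  by rewrite expr2 -[in P j i]Psym mxE.
have Pii_ge0 : 0 <= P i i by rewrite Pii; apply: sumr_ge0 => j _; apply: sqr_ge0.
have : P i i ^+ 2 <= P i i.
  by rewrite [leRHS]Pii (bigD1 i) //= lerDl; apply: sumr_ge0 => j _; apply: sqr_ge0.
by rewrite Pii_ge0 /=; nra.
Qed.

Lemma frob2_diag_sub_ge n (ev : 'rV[R]_n) (W P : 'M[R]_n) :
  P^T = P -> P *m P = P -> W *m P = W ->
  \sum_i ev 0 i ^+ 2 * (1 - P i i) <= frob2 (diag_mx ev - W).
Proof.
move=> Psym Pidem WP; set D := diag_mx ev; set P' := 1%:M - P.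
have P'sym : P'^T = P' by rewrite linearB /= trmx1 Psym.
have P'idem : P' *m P' = P'.
  by rewrite mulmxBr mulmx1 mulmxBl mul1mx Pidem subrr subr0.
have -> : D - W = D *m P' + (D - W) *m P.
  by rewrite mulmxBr mulmx1 mulmxBl WP addrA subrK.
apply: le_trans (frob2_le_addr _); last first.
  by rewrite trmx_mul Psym mulmxA -(mulmxA D) mulmxBl mul1mx Pidem subrr mulmx0 mul0mx.
rewrite frob2E trmx_mul P'sym tr_diag_mx mulmxA -(mulmxA D) P'idem.
rewrite mul_diag_mx mul_mx_diag /mxtrace.
by apply: ler_sum => i _; rewrite !mxE eqxx mulr1n [leRHS]mulrAC -expr2.
Qed.

Lemma eckart_young_diag n (ev : 'rV[R]_n) (S : {set 'I_n}) (W : 'M[R]_n) :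
  (\rank W <= #|S|)%N ->
  (forall i j, i \in S -> j \notin S -> `|ev 0 j| <= `|ev 0 i|) ->
  \sum_(i in ~: S) ev 0 i ^+ 2 <= frob2 (diag_mx ev - W).
Proof.
move=> rkW top; have [P [Psym Pidem WP trP]] := row_proj_exists W.
apply: le_trans (frob2_diag_sub_ge ev Psym Pidem WP).
have top_sqr i j : i \in S -> j \notin S -> ev 0 j ^+ 2 <= ev 0 i ^+ 2.
  move=> iS jS; rewrite -(real_normK (num_real (ev 0 i))).
  rewrite -(real_normK (num_real (ev 0 j))).
  by rewrite ler_sqr ?nnegrE ?normr_ge0 ?top.
have := weighted_sum_le_top_sum (fun i => sqr_ge0 (ev 0 i))
  (fun i => sym_idem_diag_bounds i Psym Pidem) _ top_sqr.
have sumP : \sum_i P i i = (\rank W)%:R := trP.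
rewrite sumP ler_nat => /(_ rkW) le_top.
under [leRHS]eq_bigr do rewrite mulrBr mulr1.
rewrite sumrB (bigID (mem S) xpredT) /=.
under eq_bigl do rewrite in_setC.
lra.
Qed.

End RealFieldMatrices.

Lemma eckart_young (R : realType) n d (M X X' : 'M[R]_n) :
  top_d_eig_truncation d M X -> (\rank X' <= d)%N ->
  frob2 (M - X) <= frob2 (M - X').
Proof.
move=> [Q [ev [S [[QQt QtQ] -> cardS top ->]]]] rkX'.
have -> : frob2 (Q *m diag_mx ev *m Q^T - X')
    = frob2 (diag_mx ev - Q^T *m X' *m Q).
  rewrite -(frob2_conj_orth (diag_mx ev - _) QtQ) mulmxBr mulmxBl.
  by rewrite !mulmxA QQt mul1mx -[X' *m Q *m Q^T]mulmxA QQt mulmx1.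
rewrite -mulmxBl -mulmxBr frob2_conj_orth // -raddfB frob2_diag_mx.
have rkW : (\rank (Q^T *m X' *m Q) <= #|S|)%N.
  by rewrite cardS (leq_trans (mxrankM_maxl _ _)) // (leq_trans (mxrankM_maxr _ _)).
apply: le_trans (eckart_young_diag rkW top); rewrite [leRHS]big_mkcond.
by apply: ler_sum => i _; rewrite !mxE in_setC;
  case: (i \in S); rewrite /= ?subrr ?subr0 ?expr0n.
Qed.

Lemma objective_addr_diag (R : realType) n (C L X : 'M[R]_n) :
  is_diag_mx L -> objective (C + L) X = objective C X.
Proof.
move=> /is_diag_mxP L0; congr (_ * _); apply: eq_bigr => i _.
by apply: eq_bigr => j ij; rewrite mxE L0 ?addr0 // neq_ltn ij.
Qed.

Lemma objective_frob2 (R : realType) n (M X : 'M[R]_n) : M^T = M -> X^T = X ->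
  objective M X = 4^-1 * (frob2 (M - X) - \sum_i (M i i - X i i) ^+ 2).
Proof.
move=> Msym Xsym; have MXsym : (M - X)^T = M - X by rewrite linearB /= Msym Xsym.
have diagE : \sum_i (M - X) i i ^+ 2 = \sum_i (M i i - X i i) ^+ 2.
  by apply: eq_bigr => i _; rewrite !mxE.
have offdiagE : \sum_(i < n) \sum_(j < n | (i < j)%N) (M - X) i j ^+ 2
    = \sum_(i < n) \sum_(j < n | (i < j)%N) (M i j - X i j) ^+ 2.
  by apply: eq_bigr => i _; apply: eq_bigr => j _; rewrite !mxE.
by rewrite (frob2_sym MXsym) diagE offdiagE /objective; field.
Qed.

Lemma in_T_gram_diag (R : realType) n d (Y : 'M[R]_(n, d)) i :
  in_T Y -> (Y *m Y^T) i i = 1.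
Proof.
move=> /(_ i); rewrite /row_norm => /(congr1 (fun x => x ^+ 2)).
rewrite sqr_sqrtr ?expr1n; last by apply: sumr_ge0 => j _; apply: sqr_ge0.
by rewrite mxE => <-; apply: eq_bigr => j _; rewrite mxE expr2.
Qed.

Lemma gram_psd (R : realType) n d (Y : 'M[R]_(n, d)) : psd (Y *m Y^T).
Proof.
move=> v; have := frob2_ge0 (v^T *m Y).
by rewrite frob2E /mxtrace big_ord1 trmx_mul trmxK !mulmxA.
Qed.

Lemma in_T_gram_feasible (R : realType) n d (Y : 'M[R]_(n, d)) :
  in_T Y -> feasible d (Y *m Y^T).
Proof.
move=> Yunit; split; last exact: gram_psd.
- by rewrite trmx_mul trmxK.
- exact: leq_trans (mxrankM_maxl _ _) (rank_leq_col _).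
- by move=> i; apply: in_T_gram_diag.
Qed.

Lemma diag_shift_truncation_minimizer (R : realType) n d (C L X : 'M[R]_n) :
  C^T = C -> is_diag_mx L -> feasible d X ->
  top_d_eig_truncation d (C + L) X -> global_minimizer d C X.
Proof.
move=> Csym Ldiag feasX trunc; split=> // X' [X'sym rkX' X'1 _].
have [Xsym _ X1 _] := feasX.
have CLsym : (C + L)^T = C + L.
  by have /diag_mxP[l ->] := Ldiag; rewrite linearD /= Csym tr_diag_mx.
rewrite -!(objective_addr_diag C _ Ldiag) !objective_frob2 //.
have -> : \sum_i ((C + L) i i - X' i i) ^+ 2 = \sum_i ((C + L) i i - X i i) ^+ 2.
  by apply: eq_bigr => i _; rewrite X1 X'1.
by apply: ler_wpM2l; rewrite ?invr_ge0 // lerD2r (eckart_young trunc rkX').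
Qed.

Theorem theorem6p3 (R : realType) (n d : nat) (C : 'M[R]_n) (Y : 'M[R]_(n, d)) :
  (1 < d)%N -> (d <= n)%N ->
  C^T = C -> (forall i, C i i = 1) ->
  in_T Y ->
  let psi := Y *m Y^T - C in
  let FY := 2%:R *: (psi *m Y) in
  FY - mdiag (FY *m Y^T) *m Y = 0 ->
  let lambda := 2^-1 *: mdiag (FY *m Y^T) in
  top_d_eig_truncation d (C + lambda) (Y *m Y^T) ->
  global_minimizer d C (Y *m Y^T).
Proof.
move=> _ _ Csym _ Yunit psi FY _ lambda.
apply: diag_shift_truncation_minimizer Csym _ (in_T_gram_feasible Yunit).
by rewrite /lambda /mdiag -linearZ diag_mx_is_diag.
Qed.
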